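(* We have $K_{{\cal Z}_1}({\cal R}^1)=R_{q-1}$, so ${\cal R}^1$ is not exceptional for $K_{{\cal Z}_1}$. In fact for $z_0=\pi_1(0,\lambda,\nu, v)\in {\cal R}^1$, $$K_{{\cal Z}_1}(z)=B\begin{pmatrix}0&0\\ 0& I_{q-1}(v')\end{pmatrix} A$$ where $I_{q-1}$ denotes matrix inversion on ${\cal M}_{q-1}$, and $$v'=\left( {-v_{j,k}\over \lambda_j^2\nu_k^2}\right)_{2\le j,k\le q}, \quad A=\begin{pmatrix} 1 & 0& \cdots &0\\ -\lambda_2^{-1} & 1 & & \\ \vdots & & \ddots & \\ -\lambda_q^{-1} & & & 1\end{pmatrix}, \quad B = \begin{pmatrix} 1 & -\nu_2^{-1}& \cdots &-\nu_q^{-1}\\ 0& 1 & & \\ \vdots & & \ddots & \\ 0 & & & 1\end{pmatrix}.$$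
   Context: ${\cal M}_q$ is the space of complex $q\times q$ matrices, ${\bf P}({\cal M}_q)$ its projectivization. $I(x)=x^{-1}$ is matrix inversion, $J(x)=(1/x_{i,j})$ is entrywise reciprocal, and $K=I\circ J$, a birational map of ${\bf P}({\cal M}_q)$. $R_j$ denotes the set of matrices of rank $\le j$; $R_1$ is the smooth submanifold of rank-one matrices $\lambda\otimes\nu=(\lambda_i\nu_j)$. $\pi_1:{\cal Z}_1\to{\bf P}({\cal M}_q)$ is the blowup along $R_1$, with exceptional hypersurface ${\cal R}^1$, and $K_{{\cal Z}_1}=\pi_1^{-1}\circ K\circ\pi_1$ is the induced birational map. A hypersurface is exceptional if its strict transform has codimension $\ge 2$. Local coordinates: $U_1=\{z\in{\bf C}^q: z_1=1\}$; $V_{k,\ell}$ ($2\le k,\ell\le q$) is the set of matrices whose first row and first column vanish and whose $(k,\ell)$ entry equals $1$; the chart is $\pi_1:{\bf C}\times U_1\times U_1\times V_{k,\ell}\to\{x: x_{1,1}=1\}$, $\pi_1(s,\lambda,\nu,v)=\lambda\otimes\nu+sv$, in which ${\cal R}^1=\{s=0\}$ (after permuting rows/columns one may assume the $(1,1)$ entry is nonzero). *)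

From HB Require Import structures.
From mathcomp Require Import all_boot all_order all_algebra.
From mathcomp Require Import complex reals.
Set Implicit Arguments. Unset Strict Implicit. Unset Printing Implicit Defensive.
Import Order.TTheory GRing.Theory Num.Theory.
Local Open Scope ring_scope.

Section Defs.
Variable R : realType.
Local Notation C := (R[i]).

Definition Jmx m n (x : 'M[C]_(m, n)) : 'M[C]_(m, n) := \matrix_(i, j) (x i j)^-1.

Definition Kmap n (x : 'M[C]_n) : 'M[C]_n := invmx (Jmx x).

(* Matrices q x q are indexed as 'M_(1 + n) with q = n + 1; index 0 is the
   paper's index 1, and the block of size n carries indices 2..q.
   lam, nu : 'cV_n are (lambda_2..lambda_q), (nu_2..nu_q); lambda_1 = nu_1 = 1
   (points of U_1).  v in V_{k,l} is block_mx 0 0 0 w with w k l = 1. *)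
Definition vfull n (lam : 'cV[C]_n) : 'cV[C]_(1 + n) := col_mx 1 lam.

Definition Vmx n (w : 'M[C]_n) : 'M[C]_(1 + n) := block_mx 0 0 0 w.

Definition pi1 n (s : C) (lam nu : 'cV[C]_n) (w : 'M[C]_n) : 'M[C]_(1 + n) :=
  vfull lam *m (vfull nu)^T + s *: Vmx w.

Definition vprime n (lam nu : 'cV[C]_n) (w : 'M[C]_n) : 'M[C]_n :=
  \matrix_(j, k) (- w j k / (lam j 0 ^+ 2 * nu k 0 ^+ 2)).

Definition Amx n (lam : 'cV[C]_n) : 'M[C]_(1 + n) :=
  block_mx 1 0 (- map_mx GRing.inv lam) 1.

Definition Bmx n (nu : 'cV[C]_n) : 'M[C]_(1 + n) :=
  block_mx 1 (- (map_mx GRing.inv nu)^T) 0 1.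

Definition KZ1_formula n (lam nu : 'cV[C]_n) (w : 'M[C]_n) : 'M[C]_(1 + n) :=
  Bmx nu *m block_mx (0 : 'M_1) 0 0 (invmx (vprime lam nu w)) *m Amx lam.

Definition mx_lim m n (X : C -> 'M[C]_(m, n)) (M : 'M[C]_(m, n)) : Prop :=
  forall e : C, 0 < e -> exists2 d : C, 0 < d &
    forall s : C, s != 0 -> `|s| < d -> forall i j, `|X s i j - M i j| < e.

(* projective convergence [X(s)] -> [M] in P(M): some rescaling converges to M
   (meaningful when M != 0) *)
Definition proj_lim m n (X : C -> 'M[C]_(m, n)) (M : 'M[C]_(m, n)) : Prop :=
  M != 0 /\ exists c : C -> C, mx_lim (fun s => c s *: X s) M.

Definition K_defined_near0 n (lam nu : 'cV[C]_n) (w : 'M[C]_n) : Prop :=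
  exists2 d : C, 0 < d & forall s : C, s != 0 -> `|s| < d ->
    (forall i j, pi1 s lam nu w i j != 0) /\ Jmx (pi1 s lam nu w) \in unitmx.

(* K_{Z_1}(pi_1(0, lam, nu, v)) = [M] : the value of the induced birational map
   on the exceptional divisor, i.e. the limit of K(pi_1(s,lam,nu,v)) as s -> 0 *)
Definition KZ1_value n (lam nu : 'cV[C]_n) (w : 'M[C]_n) (M : 'M[C]_(1 + n)) : Prop :=
  K_defined_near0 lam nu w /\ proj_lim (fun s => Kmap (pi1 s lam nu w)) M.

(* generic point of R^1 in the chart C x U_1 x U_1 x V_{k,l} (with s = 0) *)
Definition generic_R1_point n (lam nu : 'cV[C]_n) (w : 'M[C]_n) : Prop :=
  (exists k l, w k l = 1) /\ (forall j, lam j 0 != 0) /\ (forall j, nu j 0 != 0)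
  /\ vprime lam nu w \in unitmx.

End Defs.

From HB Require Import structures.
From mathcomp Require Import all_boot all_order all_algebra.
From mathcomp Require Import complex reals.
From mathcomp Require Import all_classical all_analysis.
From mathcomp.algebra_tactics Require Import ring.
Import Order.TTheory GRing.Theory Num.Theory.
Import numFieldNormedType.Exports.
Local Open Scope ring_scope.
Local Open Scope classical_set_scope.
Set Implicit Arguments. Unset Strict Implicit. Unset Printing Implicit Defensive.

(** In the chart, [pi1 s] has blocks [1], [nu^T], [lam] and [lam nu^T + s w],
    so the entrywise reciprocal [J (pi1 s)] is a rank-one matrix plus a
    correction of order [s].  The elementary matrices [A] and [B] clear the
    first column and row: [A J(pi1 s) B = diag(1, s H(s))], where [H(s)] is a
    rational function of [s] with [H(0) = v'].  Inverting,
    [s K(pi1 s) = B diag(s, H(s)^-1) A], which tends to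
    [B diag(0, v'^-1) A] as [s -> 0]; this matrix has rank [q - 1].
    Conversely, a matrix [M] of rank [q - 1] whose kernel and cokernel are
    spanned by vectors [x], [y] without zero entries is brought to the form
    [diag(0, N)] by the matrices [A], [B] built from the ratios of the entries
    of [x] and [y]; choosing [v'] proportional to [N^-1] exhibits [M] as a
    value of [K_{Z_1}]. *)

Section PuncturedLimits.
Variable K : numFieldType.

Lemma near_dnbhs0_ball (P : K -> Prop) : (\forall s \near 0^', P s) ->
  exists2 d : K, 0 < d & forall s, s != 0 -> `|s| < d -> P s.
Proof.
rewrite near_withinE => /nbhs_ballP[d d0 hd]; exists d => // s s0 sd.
by apply: hd s0; rewrite -ball_normE /= sub0r normrN.
Qed.

Lemma cvg0_id : s @[s --> 0^'] --> (0 : K).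
Proof. exact: nbhs_dnbhs. Qed.

Lemma cvg0_sum (I : finType) (F : I -> K -> K) (L : I -> K) :
  (forall i, F i s @[s --> 0^'] --> L i) ->
  \sum_i F i s @[s --> 0^'] --> \sum_i L i.
Proof. by move=> h; apply: cvg_big => //; exact: add_continuous. Qed.

Lemma cvg0_prod (I : finType) (F : I -> K -> K) (L : I -> K) :
  (forall i, F i s @[s --> 0^'] --> L i) ->
  \prod_i F i s @[s --> 0^'] --> \prod_i L i.
Proof. by move=> h; apply: cvg_big => //; exact: mul_continuous. Qed.

Definition mx_cvg0 m n (F : K -> 'M[K]_(m, n)) (L : 'M[K]_(m, n)) :=
  forall i j, F s i j @[s --> 0^'] --> L i j.

Lemma mx_cvg0_cst m n (L : 'M[K]_(m, n)) : mx_cvg0 (fun=> L) L.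
Proof. by move=> i j; exact: cvg_cst. Qed.

Lemma mx_cvg0_affine m n (L D : 'M[K]_(m, n)) : mx_cvg0 (fun s => L + s *: D) L.
Proof.
move=> i j; under eq_cvg do rewrite !mxE.
suff : L i j + s * D i j @[s --> 0^'] --> L i j + 0 * D i j by rewrite mul0r addr0.
by apply: cvgD; [exact: cvg_cst|apply: cvgM; [exact: cvg0_id|exact: cvg_cst]].
Qed.

Lemma mx_cvg0_scalar m : mx_cvg0 (fun s : K => (s%:M : 'M[K]_m)) 0%:M.
Proof.
move=> i j; rewrite mxE; under eq_cvg do rewrite mxE.
by case: (i == j); rewrite ?mulr1n ?mulr0n; [exact: cvg0_id|exact: cvg_cst].
Qed.

Lemma mx_cvg0_near_eq m n (F G : K -> 'M[K]_(m, n)) L :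
  (\forall s \near 0^', F s = G s) -> mx_cvg0 F L -> mx_cvg0 G L.
Proof.
move=> FG hF i j; apply: cvg_trans (hF i j); apply: near_eq_cvg.
by apply: filterS FG => s ->.
Qed.

Lemma mx_cvg0_neq0 m n (F : K -> 'M[K]_(m, n)) (L : 'M[K]_(m, n)) :
  (forall i j, L i j != 0) -> mx_cvg0 F L ->
  \forall s \near 0^', forall i j, F s i j != 0.
Proof.
move=> L_neq0 hF; apply: filter_forall => i; apply: filter_forall => j.
exact: cvgr_neq0 (hF i j) (L_neq0 i j).
Qed.

Lemma mx_cvg0_mul m n p (F : K -> 'M[K]_(m, n)) (G : K -> 'M[K]_(n, p)) L M :
  mx_cvg0 F L -> mx_cvg0 G M -> mx_cvg0 (fun s => F s *m G s) (L *m M).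
Proof.
move=> hF hG i j; rewrite mxE; under eq_cvg do rewrite mxE.
by apply: cvg0_sum => k; apply: cvgM.
Qed.

Lemma mx_cvg0_block m1 m2 n1 n2 (F1 : K -> 'M[K]_(m1, n1))
    (F2 : K -> 'M[K]_(m1, n2)) (F3 : K -> 'M[K]_(m2, n1))
    (F4 : K -> 'M[K]_(m2, n2)) L1 L2 L3 L4 :
  mx_cvg0 F1 L1 -> mx_cvg0 F2 L2 -> mx_cvg0 F3 L3 -> mx_cvg0 F4 L4 ->
  mx_cvg0 (fun s => block_mx (F1 s) (F2 s) (F3 s) (F4 s)) (block_mx L1 L2 L3 L4).
Proof.
move=> h1 h2 h3 h4 i j; rewrite -(splitK i) -(splitK j).
case: (fintype.split i) => i'; case: (fintype.split j) => j' /=.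
- rewrite block_mxEul; under eq_cvg do rewrite block_mxEul; exact: h1.
- rewrite block_mxEur; under eq_cvg do rewrite block_mxEur; exact: h2.
- rewrite block_mxEdl; under eq_cvg do rewrite block_mxEdl; exact: h3.
- rewrite block_mxEdr; under eq_cvg do rewrite block_mxEdr; exact: h4.
Qed.

Lemma cvg0_det m (F : K -> 'M[K]_m) L :
  mx_cvg0 F L -> \det (F s) @[s --> 0^'] --> \det L.
Proof.
move=> hF; apply: cvg0_sum => sigma; apply: cvgM; first exact: cvg_cst.
by apply: cvg0_prod => i; exact: hF.
Qed.

Lemma mx_cvg0_adj m (F : K -> 'M[K]_m) L :
  mx_cvg0 F L -> mx_cvg0 (fun s => \adj (F s)) (\adj L).
Proof.
move=> hF i j; rewrite mxE; under eq_cvg do rewrite mxE.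
apply: cvgM; first exact: cvg_cst.
apply: (@cvg0_det _ (fun s => row' j (col' i (F s)))) => a b.
by rewrite !mxE; under eq_cvg do rewrite !mxE; exact: hF.
Qed.

Lemma mx_cvg0_inv m (F : K -> 'M[K]_m) L :
  L \in unitmx -> mx_cvg0 F L -> mx_cvg0 (fun s => invmx (F s)) (invmx L).
Proof.
move=> uL hF; have dL : \det L != 0 by rewrite -unitfE -unitmxE.
have hdet := cvg0_det hF.
apply: (@mx_cvg0_near_eq _ _ (fun s => (\det (F s))^-1 *: \adj (F s))).
  near=> s; rewrite /invmx unitmxE unitfE.
  suff -> : \det (F s) != 0 by [].
  by near: s; exact: cvgr_neq0 hdet dL.
rewrite /invmx unitmxE unitfE dL => i j; rewrite mxE; under eq_cvg do rewrite mxE.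
by apply: cvgM; [exact: cvgV|exact: mx_cvg0_adj].
Unshelve. all: by end_near. Qed.

End PuncturedLimits.

Lemma kernels_block_mx (F : fieldType) n (P : 'M[F]_(1 + n)) (a b : F) :
  a != 0 -> b != 0 -> P *m col_mx a%:M 0 = 0 -> row_mx b%:M 0 *m P = 0 ->
  P = block_mx 0 0 0 (drsubmx P).
Proof.
move=> a0 b0 /eqP + /eqP; rewrite -[P]submxK block_mxKdr.
rewrite mul_block_col mul_row_block !mulmx0 !mul0mx !addr0.
rewrite !mul_mx_scalar col_mx_eq0 !scalemx_eq0 (negPf a0) /=.
case/andP=> /eqP-> /eqP->; rewrite !mul_scalar_mx row_mx_eq0 !scalemx_eq0 (negPf b0).
by case/andP=> _ /eqP->.
Qed.

Section Chart.
Variable R : realType.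
Local Notation C := R[i].
(* The topology of a [numFieldType] is only found through the structure, not
   through the type [R[i]] itself, hence the cast in filters such as [0^']. *)
Local Notation Cnum := (C : numFieldType).

Lemma mx_cvg0_lim m n (F : C -> 'M[C]_(m, n)) L : mx_cvg0 F L -> mx_lim F L.
Proof.
move=> hF e e0; apply: near_dnbhs0_ball.
apply: filter_forall => i; apply: filter_forall => j.
by apply: filterS ((cvgrPdist_lt _ _).1 (hF i j) e e0) => s; rewrite distrC.
Qed.

Lemma KZ1_value_scale n (lam nu : 'cV[C]_n) (w : 'M[C]_n) c M :
  c != 0 -> KZ1_value lam nu w (c *: M) -> KZ1_value lam nu w M.
Proof.
move=> c0 [hdef [cM0 [f hf]]]; split=> //; split.
  by apply: contraNneq cM0 => ->; rewrite scaler0.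
exists (fun s => c^-1 * f s) => e e0.
have ce0 : 0 < `|c| * e by rewrite mulr_gt0 ?normr_gt0.
have [d d0 hd] := hf _ ce0; exists d => // s s0 sd i j.
have := hd s s0 sd i j; rewrite !mxE; set k := Kmap _ i j.
have -> : c^-1 * f s * k - M i j = c^-1 * (f s * k - c * M i j) by field.
by rewrite normrM normfV ltr_pdivrMl ?normr_gt0.
Qed.

Lemma Jmx_block m1 m2 n1 n2 (P : 'M[C]_(m1, n1)) (Q : 'M[C]_(m1, n2))
    (S : 'M[C]_(m2, n1)) (T : 'M[C]_(m2, n2)) :
  Jmx (block_mx P Q S T) = block_mx (Jmx P) (Jmx Q) (Jmx S) (Jmx T).
Proof.
apply/matrixP => i j; rewrite -(splitK i) -(splitK j).
by case: (fintype.split i) => i'; case: (fintype.split j) => j';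
  rewrite [LHS]mxE ?block_mxEul ?block_mxEur ?block_mxEdl ?block_mxEdr mxE.
Qed.

Variable n : nat.
Implicit Types (lam nu : 'cV[C]_n) (w : 'M[C]_n) (x : 'cV[C]_(1 + n)).

Lemma Amx_unit lam : Amx lam \in unitmx.
Proof. by rewrite unitmxE det_lblock !det1 mulr1 unitr1. Qed.

Lemma Bmx_unit nu : Bmx nu \in unitmx.
Proof. by rewrite unitmxE det_ublock !det1 mulr1 unitr1. Qed.

Lemma trmx_Amx nu : (Amx nu)^T = Bmx nu.
Proof. by rewrite /Amx tr_block_mx !trmx1 trmx0 linearN. Qed.

Lemma mxrank_Bmx_block_Amx lam nu (N : 'M[C]_n) :
  \rank (Bmx nu *m block_mx (0 : 'M[C]_1) 0 0 N *m Amx lam) = \rank N.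
Proof.
rewrite mxrankMfree ?row_free_unit ?Amx_unit // eqmxMfull ?row_full_unit ?Bmx_unit //.
by rewrite rank_diag_block_mx mxrank0.
Qed.

Lemma mxrank_KZ1_formula lam nu w : vprime lam nu w \in unitmx ->
  \rank (KZ1_formula lam nu w) = n.
Proof. by move=> uv; rewrite mxrank_Bmx_block_Amx mxrank_unit ?unitmx_inv. Qed.

Lemma pi1_block s lam nu w :
  pi1 s lam nu w = block_mx 1 nu^T lam (lam *m nu^T + s *: w).
Proof.
rewrite /pi1 /vfull /Vmx tr_col_mx mul_col_row scale_block_mx add_block_mx.
by rewrite !scaler0 !addr0 trmx1 !mul1mx mulmx1 ?add0r.
Qed.

Definition ratio_col (x : 'cV[C]_(1 + n)) : 'cV[C]_n :=
  \col_j (x 0 0 / x (rshift 1 j) 0).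

Lemma ratio_col_neq0 x : (forall j, x j 0 != 0) -> forall j, ratio_col x j 0 != 0.
Proof. by move=> x_neq0 j; rewrite mxE mulf_neq0 ?invr_eq0. Qed.

Lemma Amx_ratio_colE x : (forall j, x j 0 != 0) ->
  Amx (ratio_col x) *m x = col_mx (x 0 0)%:M 0.
Proof.
move=> x_neq0; rewrite -[X in _ *m X]vsubmxK /Amx mul_block_col !mul1mx mul0mx addr0.
congr col_mx.
  by rewrite [LHS]mx11_scalar mxE; congr (x _ 0)%:M; apply: val_inj.
apply/matrixP => i j; rewrite (ord1 j) !mxE big_ord1 !mxE.
have -> : lshift n (0 : 'I_1) = 0 by apply: val_inj.
by field; rewrite !x_neq0.
Qed.

Lemma ratio_col_Bmx (y : 'rV[C]_(1 + n)) : (forall j, y 0 j != 0) ->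
  y *m Bmx (ratio_col y^T) = row_mx (y 0 0)%:M 0.
Proof.
move=> y_neq0; rewrite -trmx_Amx -[X in X *m _]trmxK -trmx_mul Amx_ratio_colE.
  by rewrite tr_col_mx tr_scalar_mx trmx0 mxE.
by move=> j; rewrite mxE.
Qed.

Lemma vfull_neq0 (v : 'cV[C]_n) : (forall j, v j 0 != 0) -> forall i, vfull v i 0 != 0.
Proof.
move=> v_neq0 i; rewrite -(splitK i); case: (fintype.split i) => i' /=.
  by rewrite col_mxEu (ord1 i') mxE /= oner_neq0.
by rewrite col_mxEd.
Qed.

Section GenericPoint.
Variables (lam nu : 'cV[C]_n) (w : 'M[C]_n).
Hypotheses (lam_neq0 : forall j, lam j 0 != 0) (nu_neq0 : forall j, nu j 0 != 0).

(* [s * pi1_schur s] is the Schur complement of the corner entry [1] in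
   [J (pi1 s)]. *)
Definition pi1_schur (s : C) : 'M[C]_n :=
  \matrix_(i, j) (- w i j / (lam i 0 * nu j 0 * (lam i 0 * nu j 0 + s * w i j))).

Lemma vprime_schur0 : vprime lam nu w = pi1_schur 0.
Proof. by apply/matrixP => i j; rewrite !mxE; field; rewrite lam_neq0 nu_neq0. Qed.

Lemma mx_cvg0_pi1_schur : mx_cvg0 pi1_schur (pi1_schur 0).
Proof.
move=> i j; rewrite mxE; under eq_cvg do rewrite mxE.
apply: cvgM; first exact: cvg_cst.
apply: cvgV; first by rewrite mul0r addr0 !mulf_neq0.
apply: cvgM; first exact: cvg_cst.
apply: cvgD; first exact: cvg_cst.
by apply: cvgM; [exact: cvg0_id|exact: cvg_cst].
Qed.

Lemma near_pi1_neq0 :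
  \forall s \near (0 : Cnum)^', forall i j, pi1 s lam nu w i j != 0.
Proof.
apply: (@mx_cvg0_neq0 C _ _ _ (vfull lam *m (vfull nu)^T)); last first.
  exact: mx_cvg0_affine.
move=> i j; rewrite mxE big_ord1 [(vfull nu)^T _ _]mxE.
by rewrite mulf_neq0 ?vfull_neq0.
Qed.

Lemma Amx_Jpi1_Bmx s : (forall i j, pi1 s lam nu w i j != 0) ->
  Amx lam *m Jmx (pi1 s lam nu w) *m Bmx nu = block_mx 1 0 0 (s *: pi1_schur s).
Proof.
move=> pi1_neq0.
have hw i j : lam i 0 * nu j 0 + s * w i j != 0.
  by have := pi1_neq0 (rshift 1 i) (rshift 1 j); rewrite pi1_block block_mxEdr !mxE big_ord1 !mxE.
rewrite pi1_block Jmx_block /Amx /Bmx !mulmx_block.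
have J1 : Jmx (1 : 'M[C]_1) = 1 by apply/matrixP => i j; rewrite !mxE !ord1 invr1.
have -> : Jmx nu^T = (map_mx GRing.inv nu)^T by apply/matrixP => i j; rewrite !mxE.
have -> : Jmx lam = map_mx GRing.inv lam by apply/matrixP => i j; rewrite !mxE.
rewrite J1 !mul1mx !mul0mx !mulmx0 !mulmx1 !addr0 ?add0r addNr mul0mx add0r.
rewrite [1 *m _]mul1mx addNr; congr block_mx; apply/matrixP => i j.
rewrite !mxE big_ord1 !mxE big_ord1 !mxE.
by field; rewrite lam_neq0 nu_neq0 hw.
Qed.

Definition Kscaled (s : C) : 'M[C]_(1 + n) :=
  Bmx nu *m block_mx (s%:M : 'M[C]_1) 0 0 (invmx (pi1_schur s)) *m Amx lam.

Lemma Kscaled0 : Kscaled 0 = KZ1_formula lam nu w.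
Proof. by rewrite /Kscaled /KZ1_formula vprime_schur0 raddf0. Qed.

Lemma mx_cvg0_Kscaled : pi1_schur 0 \in unitmx -> mx_cvg0 Kscaled (Kscaled 0).
Proof.
move=> u0; apply: mx_cvg0_mul; last exact: mx_cvg0_cst.
apply: mx_cvg0_mul; first exact: mx_cvg0_cst.
apply: mx_cvg0_block; [exact: mx_cvg0_scalar|exact: mx_cvg0_cst|exact: mx_cvg0_cst|].
exact: mx_cvg0_inv mx_cvg0_pi1_schur.
Qed.

Lemma scale_Kmap_pi1 s : s != 0 -> (forall i j, pi1 s lam nu w i j != 0) ->
    \det (pi1_schur s) != 0 ->
  Jmx (pi1 s lam nu w) \in unitmx /\ s *: Kmap (pi1 s lam nu w) = Kscaled s.
Proof.
move=> s0 pi1_neq0 dH; set J := Jmx _.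
have AJB := Amx_Jpi1_Bmx pi1_neq0.
have uH : pi1_schur s \in unitmx by rewrite unitmxE unitfE.
have uJ : J \in unitmx.
  have : Amx lam *m J *m Bmx nu \in unitmx.
    by rewrite AJB unitmxE det_lblock det1 mul1r detZ unitfE mulf_neq0 ?expf_neq0.
  by rewrite !unitmx_mul => /andP[/andP[]].
have AJ : Amx lam *m J = block_mx 1 0 0 (s *: pi1_schur s) *m invmx (Bmx nu).
  by rewrite -AJB mulmxK ?Bmx_unit.
have DE : block_mx (s%:M : 'M[C]_1) 0 0 (invmx (pi1_schur s)) *m
          block_mx 1 0 0 (s *: pi1_schur s) = s%:M.
  rewrite mulmx_block !mulmx0 !mul0mx !addr0 add0r mulmx1 -scalemxAr mulVmx //.
  by rewrite scalemx1 -scalar_mx_block.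
have KJ : Kscaled s *m J = s%:M.
  rewrite -mulmxA AJ mulmxA -(mulmxA (Bmx nu)) DE mul_mx_scalar.
  by rewrite -scalemxAl mulmxV ?Bmx_unit // scalemx1.
by split=> //; rewrite -[RHS](mulmxK uJ) KJ mul_scalar_mx.
Qed.

Lemma near_scale_Kmap_pi1 : vprime lam nu w \in unitmx ->
  \forall s \near (0 : Cnum)^',
    ((forall i j, pi1 s lam nu w i j != 0) /\ Jmx (pi1 s lam nu w) \in unitmx) /\
    s *: Kmap (pi1 s lam nu w) = Kscaled s.
Proof.
move=> uv; have near_det : \forall s \near (0 : Cnum)^', \det (pi1_schur s) != 0.
  apply: cvgr_neq0 (cvg0_det mx_cvg0_pi1_schur) _.
  by rewrite -unitfE -unitmxE -vprime_schur0.
near=> s.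
have s0 : s != 0 by near: s; exact: (@nbhs_dnbhs_neq _ (0 : Cnum)).
have pi1_neq0 : forall i j, pi1 s lam nu w i j != 0 by near: s; exact: near_pi1_neq0.
have det_neq0 : \det (pi1_schur s) != 0 by near: s; exact: near_det.
by have [uJ ->] := scale_Kmap_pi1 s0 pi1_neq0 det_neq0.
Unshelve. all: by end_near. Qed.

Lemma KZ1_value_formula : (0 < n)%N -> vprime lam nu w \in unitmx ->
  KZ1_value lam nu w (KZ1_formula lam nu w).
Proof.
move=> n_gt0 uv; have near_K := near_scale_Kmap_pi1 uv.
split.
  have [d d0 near_d] := near_dnbhs0_ball near_K.
  by exists d => // s s0 sd; case: (near_d s s0 sd).
split.
  by apply: contraTneq n_gt0 => M0; rewrite -(mxrank_KZ1_formula uv) M0 mxrank0.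
exists id; apply: mx_cvg0_lim; rewrite -Kscaled0.
apply: mx_cvg0_near_eq (mx_cvg0_Kscaled _); last by rewrite -vprime_schur0.
by apply: filterS near_K => s [_ ->].
Qed.

End GenericPoint.

Lemma vprimeZ lam nu c w : vprime lam nu (c *: w) = c *: vprime lam nu w.
Proof. by apply/matrixP => i j; rewrite !mxE !mulNr mulrN mulrA. Qed.

Definition vprime_inv lam nu (V : 'M[C]_n) : 'M[C]_n :=
  \matrix_(j, k) (- V j k * (lam j 0 ^+ 2 * nu k 0 ^+ 2)).

Lemma vprime_invK lam nu V : (forall j, lam j 0 != 0) -> (forall j, nu j 0 != 0) ->
  vprime lam nu (vprime_inv lam nu V) = V.
Proof.
move=> lam_neq0 nu_neq0; apply/matrixP => j k; rewrite !mxE !mulNr opprK.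
by rewrite mulfK // mulf_neq0 ?expf_neq0.
Qed.

Lemma generic_R1_point_vprime lam nu V : (0 < n)%N ->
    (forall j, lam j 0 != 0) -> (forall j, nu j 0 != 0) -> V \in unitmx ->
  exists2 c, c != 0 & exists2 w, generic_R1_point lam nu w & vprime lam nu w = c *: V.
Proof.
move=> n_gt0 lam_neq0 nu_neq0 uV.
have /matrix0Pn[k [l Vkl]] : V != 0.
  by apply: contraTneq n_gt0 => V0; rewrite -(mxrank_unit uV) V0 mxrank0.
set c := vprime_inv lam nu V k l.
have c_neq0 : c != 0 by rewrite /c mxE mulf_neq0 ?oppr_eq0 ?mulf_neq0 ?expf_neq0.
have vprime_w : vprime lam nu (c^-1 *: vprime_inv lam nu V) = c^-1 *: V.
  by rewrite vprimeZ vprime_invK.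
exists c^-1; rewrite ?invr_eq0 //; exists (c^-1 *: vprime_inv lam nu V) => //.
split; first by exists k, l; rewrite mxE mulVf.
by rewrite vprime_w unitmxZ ?unitfE ?invr_eq0.
Qed.

Lemma KZ1_value_of_kernels (M : 'M[C]_(1 + n)) : (0 < n)%N -> \rank M = n ->
    (exists2 x : 'cV[C]_(1 + n), (forall j, x j 0 != 0) & M *m x = 0) ->
    (exists2 y : 'rV[C]_(1 + n), (forall j, y 0 j != 0) & y *m M = 0) ->
  exists lam nu w, generic_R1_point lam nu w /\ KZ1_value lam nu w M.
Proof.
move=> n_gt0 rM [x x_neq0 Mx] [y y_neq0 yM].
pose lam := ratio_col x; pose nu := ratio_col y^T.
have lam_neq0 : forall j, lam j 0 != 0 by exact: ratio_col_neq0.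
have nu_neq0 : forall j, nu j 0 != 0 by apply: ratio_col_neq0 => j; rewrite mxE.
pose P := invmx (Bmx nu) *m M *m invmx (Amx lam).
have M_P : M = Bmx nu *m P *m Amx lam.
  by rewrite /P !mulmxA mulmxKV ?Amx_unit // mulmxV ?Bmx_unit // mul1mx.
have P_block : P = block_mx 0 0 0 (drsubmx P).
  apply: (kernels_block_mx (x_neq0 0) (y_neq0 0)).
    by rewrite -Amx_ratio_colE // mulmxA mulmxKV ?Amx_unit // -mulmxA Mx mulmx0.
  by rewrite -ratio_col_Bmx // /P !mulmxA mulmxK ?Bmx_unit // yM !mul0mx.
rewrite P_block in M_P; set N := drsubmx P in M_P.
have uN : N \in unitmx.
  by rewrite -row_free_unit /row_free -(mxrank_Bmx_block_Amx lam nu) -M_P rM.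
have [c c_neq0 [w gw vw]] :=
  generic_R1_point_vprime n_gt0 lam_neq0 nu_neq0 (etrans (unitmx_inv N) uN).
exists lam, nu, w; split=> //.
apply: (@KZ1_value_scale _ _ _ _ c^-1); first by rewrite invr_eq0.
have -> : c^-1 *: M = KZ1_formula lam nu w.
  rewrite /KZ1_formula vw invmxZ ?unitmxZ ?unitfE ?unitmx_inv // invmxK M_P.
  have -> : block_mx (0 : 'M[C]_1) 0 0 (c^-1 *: N) = c^-1 *: block_mx 0 0 0 N.
    by rewrite scale_block_mx !scaler0.
  by rewrite -scalemxAr -scalemxAl.
by case: gw => _ [_ [_ uv]]; exact: KZ1_value_formula.
Qed.

End Chart.

Unset Implicit Arguments.

Theorem proposition2p1 (R : realType) (n : nat) (hn : (1 <= n)%N) :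
  (* the formula, and the image lies in R_{q-1} (rank exactly q-1) *)
  (forall (lam nu : 'cV[R[i]]_n) (w : 'M[R[i]]_n),
     generic_R1_point lam nu w ->
     KZ1_value lam nu w (KZ1_formula lam nu w)
     /\ \rank (KZ1_formula lam nu w) = n)
  /\
  (* every M in R_{q-1} of rank q-1 whose kernel and left kernel are spanned by
     vectors with all entries nonzero (a dense open subset of R_{q-1}) is
     K_{Z_1} of a point of R^1 *)
  (forall M : 'M[R[i]]_(1 + n),
     \rank M = n ->
     (exists2 x : 'cV[R[i]]_(1 + n), (forall j, x j 0 != 0) & M *m x = 0) ->
     (exists2 y : 'rV[R[i]]_(1 + n), (forall j, y 0 j != 0) & y *m M = 0) ->
     exists (lam nu : 'cV[R[i]]_n) (w : 'M[R[i]]_n),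
       generic_R1_point lam nu w /\ KZ1_value lam nu w M).
Proof.
split=> [lam nu w [_ [lam_neq0 [nu_neq0 uv]]]|M]; last exact: KZ1_value_of_kernels.
by split; [exact: KZ1_value_formula | exact: mxrank_KZ1_formula].
Qed.
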